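(* Let $\mathbf X=\{X_i\}_{i\in\mathbb Z}$ be a stationary strongly mixing process on a finite alphabet with $0<\mathcal H_1(\mathbf X)<\infty$, whose strong mixing coefficients satisfy $\sum_{s=0}^\infty d(s)<\infty$, and which is aperiodic in the sense that $\mathcal R(\mathbf X):=\sup_{s\in\mathbb N_+}\mathbb P[X_1=X_{1+s}]<1$. Let $\beta>0$, $\ell=\beta\log n$, and $\eta>0$. Then \[ \sup_{1\le s\le\ell}\ \max_{\frac{1+\eta}{\mathcal H_1(\mathbf X)}\log n\le t\le\beta\log n}\mathbb P\!\left[X_1^t=X_{1+s}^{t+s}\right]=o\!\left(\frac1{\log n}\right)\quad(n\to\infty), \] with constants depending on $p_{\min}:=\min_{x\in\mathrm{supp}(P_{X_1})}P_{X_1}(x)$.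
   Context: Logarithms are to base $|\mathcal X|$. Strong mixing coefficient: $d(s):=\sup\{|\mathbb P[\mathcal F\mid\mathcal E]-\mathbb P[\mathcal F]|: i\in\mathbb Z,\ \mathcal E\in\sigma(X_{-\infty}^i),\ \mathcal F\in\sigma(X_{i+s}^\infty)\}$, taken w.l.o.g. non-increasing in $s$; $\mathbf X$ is strongly mixing if $d(s)\to0$. $\mathcal H_1(\mathbf X)=\lim_{t\to\infty}\frac{1}{2t+1}H_1(P_{X_{-t}^t})$ is the Shannon entropy rate (assumed to exist). $X_1^t=X_{1+s}^{t+s}$ means $X_i=X_{i+s}$ for all $i\in[t]$. *)

From HB Require Import structures.
From mathcomp Require Import all_boot all_order all_algebra.
From mathcomp Require Import all_classical all_reals all_analysis.
Set Implicit Arguments. Unset Strict Implicit. Unset Printing Implicit Defensive.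
Import Order.TTheory GRing.Theory Num.Theory numFieldNormedType.Exports.
Local Open Scope classical_set_scope.
Local Open Scope ring_scope.

Section ProcessDefs.
Context {R : realType} {d : measure_display} {Omega : measurableType d}
  (P : probability Omega R) {A : finType} (X : int -> Omega -> A).

Definition prb (E : set Omega) : R := fine (P E).

Definition logA (x : R) : R := ln x / ln (#|A|%:R).

(* each X_i is a random variable (A finite, discrete sigma-algebra) *)
Definition process_measurable : Prop :=
  forall (i : int) (a : A), measurable (X i @^-1` [set a]).

Definition stationary : Prop :=
  forall (m : int) (s : seq (int * A)),
    P [set w | all (fun p => X (p.1 + m) w == p.2) s] =
    P [set w | all (fun p => X p.1 w == p.2) s].

(* generators of sigma(X_{-oo}^i) and sigma(X_j^{oo}) *)
Definition past_gen (i : int) : set (set Omega) :=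
  [set E | exists j a, j <= i /\ E = X j @^-1` [set a]].
Definition future_gen (i : int) : set (set Omega) :=
  [set E | exists j a, i <= j /\ E = X j @^-1` [set a]].

(* strong mixing coefficient d(s); P[F | E] = P[F & E]/P[E], over P[E] > 0 *)
Definition mixing_coef (s : nat) : \bar R :=
  ereal_sup [set v : \bar R | exists (i : int) (E F : set Omega),
    [/\ <<s past_gen i >> E, <<s future_gen (i + s%:Z) >> F, 0 < prb E &
         v = (`| prb (F `&` E) / prb E - prb F |)%:E ] ].

(* block entropy H_1(P_{X_{-t}^t}), base |A|, as a sum over (2t+1)-tuples *)
Definition block_prob (t : nat) (a : (2 * t).+1.-tuple A) : R :=
  prb [set w | forall k : 'I_(2 * t).+1, X (k%:Z - t%:Z) w = tnth a k].
Definition block_entropy (t : nat) : R :=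
  - \sum_(a : (2 * t).+1.-tuple A) block_prob a * logA (block_prob a).

Definition recurrence_R : \bar R :=
  ereal_sup [set (prb [set w | X 1 w = X (1 + s%:Z) w])%:E
            | s in [set s : nat | (0 < s)%N]].

Definition match_prob (s t : nat) : R :=
  prb [set w | forall i : nat, (1 <= i <= t)%N -> X i%:Z w = X (i + s)%:Z w].

(* sup_{1<=s<=beta log n} max_{(1+eta)/h log n <= t <= beta log n} P[...]
   (0 when the index range is empty; all terms are >= 0) *)
Definition max_match_prob (h beta eta : R) (n : nat) : R :=
  sup ([set 0] `|` [set v | exists s t : nat,
         [/\ (1 <= s)%N, s%:R <= beta * logA n%:R,
             (1 + eta) / h * logA n%:R <= t%:R, t%:R <= beta * logA n%:R &
             v = match_prob s t]]).

End ProcessDefs.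

From HB Require Import structures.
From mathcomp Require Import all_boot all_order all_algebra.
From mathcomp Require Import all_classical all_reals all_analysis.
From mathcomp Require Import ring lra zify.
Import Order.TTheory GRing.Theory Num.Theory numFieldNormedType.Exports.
Local Open Scope classical_set_scope.
Local Open Scope ring_scope.
Set Implicit Arguments. Unset Strict Implicit. Unset Printing Implicit Defensive.

(* Let p be the largest one-letter probability; aperiodicity forces p < 1,
   and since the mixing coefficients are summable and non-increasing we may
   fix a gap g with q := p + d(g) < 1.  Put m := t/3.  If
   X_1^t = X_{1+s}^{t+s}, then X_j = X_{j+r} for all j <= m, where r is the
   least multiple of s exceeding 2m: the chain j, j + s, ..., j + r - s stays
   in [1, t].  Comparing the values of X on the K := m/g points 1, 1 + g, ...,
   which lie in [1, m], with their translates by r, which lie beyond 2m, a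
   mixing estimate across the gap m gives
     P[X_1^t = X_{1+s}^{t+s}] <= max_a P[X_I = a] + d(m) <= q^K + d(m),
   the last step by peeling off one g-separated point at a time.  Both
   t q^(t/(3g)) and t d(t/3) tend to 0 (the latter because d is
   non-increasing and summable), while every admissible t is at least
   (1+eta)/h log n; hence the maximal probability is o(1/log n). *)

Lemma bigsetU_ordP (T : Type) n (F : 'I_n -> set T) w :
  (\big[setU/set0]_(k < n) F k) w <-> exists k, F k w.
Proof.
split; last by case=> k Hk; rewrite (bigD1 k) //=; left.
elim/big_ind: _ => //; first by move=> x y Hx Hy [/Hx|/Hy].
by move=> k _ Hk; exists k.
Qed.

Lemma mem_zip_fst (T1 T2 : eqType) (s : seq T1) (t : seq T2) p :
  p \in zip s t -> p.1 \in s.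
Proof.
elim: s t => [|x s IH] [|y t] //=; rewrite in_cons => /orP[/eqP->|/IH H].
  by rewrite eqxx.
by rewrite H orbT.
Qed.

Lemma zip_mapl (T1 T2 : Type) (f : T1 -> T1) (s : seq T1) (t : seq T2) :
  zip (map f s) t = map (fun p => (f p.1, p.2)) (zip s t).
Proof. by elim: s t => [|x s IH] [|y t] //=; rewrite IH. Qed.

Definition sparse (g : nat) : seq int -> bool :=
  pairwise (fun i j => j + g%:Z <= i).

Fixpoint gap_points (g K : nat) : seq nat :=
  if K is K'.+1 then (1 + K' * g)%N :: gap_points g K' else [::].

Lemma gap_pointsP g K x :
  x \in gap_points g K -> exists2 k, (k < K)%N & x = (1 + k * g)%N.
Proof.
elim: K => [|K IH] //=; rewrite in_cons => /orP[/eqP->|/IH[k kK ->]].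
  by exists K.
by exists k => //; exact: ltn_trans kK _.
Qed.

Lemma size_gap_points g K : size (gap_points g K) = K.
Proof. by elim: K => //= K ->. Qed.

Lemma sparse_gap_points g K : sparse g [seq Posz x | x <- gap_points g K].
Proof.
elim: K => [|K IH] //=; rewrite IH andbT.
apply/allP => z /mapP [x /gap_pointsP [k kK ->] ->].
by rewrite -PoszD lez_nat -addnA leq_add2l -mulSnr leq_mul2r kK orbT.
Qed.

Section Tails.
Variable R : realType.

Lemma nonincreasing_mul_index_small (u : nat -> R) (B : R) :
  (forall k, 0 <= u k) -> {homo u : a b / (a <= b)%N >-> b <= a} ->
  (forall n, \sum_(0 <= k < n) u k <= B) ->
  forall e, 0 < e -> exists N, forall m, (N <= m)%N -> m%:R * u m <= e.
Proof.
move=> u0 u_noninc uB e e0.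
pose S n := \sum_(0 <= k < n) u k.
have S_nondecr a b : (a <= b)%N -> S a <= S b.
  move=> ab; rewrite /S (big_cat_nat (leq0n a) ab) /= lerDl.
  by apply: sumr_ge0 => k _.
have hs : has_sup (range S).
  by split; [exists (S 0), 0 | exists B => x [n _ <-]; exact: uB].
have e3 : 0 < e / 3 by rewrite divr_gt0.
have [x [N _ <-] HN] := sup_adherent e3 hs.
exists (2 * N.+1)%N => m Hm.
pose j := (m./2)%N.
(* m u(m) <= 3 j u(2j) <= 3 (S(2j+1) - S(j+1)), a tail of a convergent series. *)
have Hblock : j%:R * u (2 * j)%N <= S (2 * j + 1)%N - S j.+1.
  rewrite /S (big_cat_nat (leq0n j.+1) (_ : (j.+1 <= 2 * j + 1)%N)) /=;
    last by lia.
  rewrite addrC addrK.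
  apply: le_trans (_ : \sum_(j.+1 <= k < 2 * j + 1) u (2 * j)%N <= _).
    by rewrite sumr_const_nat (_ : (2 * j + 1 - j.+1 = j)%N) ?mulr_natl //; lia.
  by apply: ler_sum_nat => k /andP[_ Hk]; apply: u_noninc; lia.
have H1 : S (2 * j + 1)%N <= sup (range S).
  by apply: sup_upper_bound => //; exists (2 * j + 1)%N.
have H2 : S N <= S j.+1 by apply: S_nondecr; rewrite /j; lia.
have Hu : u m <= u (2 * j)%N by apply: u_noninc; rewrite /j; lia.
have Hj : m%:R <= 3 * j%:R :> R by rewrite -natrM ler_nat /j; lia.
apply: le_trans (_ : 3 * (j%:R * u (2 * j)%N) <= _).
  by rewrite mulrA; apply: ler_pM.
lra.
Qed.

Lemma geometric_partial_sum_le (q : R) n : 0 <= q < 1 ->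
  \sum_(0 <= k < n) q ^+ k <= (1 - q)^-1.
Proof.
case/andP=> q0 q1; have Hq : 0 < 1 - q by lra.
have E : (1 - q) * \sum_(0 <= k < n) q ^+ k = 1 - q ^+ n.
  elim: n => [|n IH]; first by rewrite big_geq // mulr0 expr0 subrr.
  by rewrite big_nat_recr //= mulrDr IH exprS; ring.
rewrite -(ler_pM2l Hq) E mulfV ?gt_eqF // gerBl.
exact: exprn_ge0.
Qed.

Lemma geometric_mul_index_small (q : R) : 0 <= q < 1 ->
  forall e, 0 < e -> exists N, forall m, (N <= m)%N -> m%:R * q ^+ m <= e.
Proof.
move=> /[dup] q01 /andP[q0 q1].
apply: (@nonincreasing_mul_index_small _ ((1 - q)^-1)).
- by move=> k; exact: exprn_ge0.
- by move=> a b ab; apply: ler_wiXn2l => //; lra.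
- by move=> n; exact: geometric_partial_sum_le.
Qed.

Definition collision_bound (q : R) (u : nat -> R) (g t : nat) : R :=
  q ^+ (t %/ 3 %/ g) + u (t %/ 3)%N.

Lemma collision_bound_mul_index_small (q : R) (u : nat -> R) (B : R) (g : nat) :
  0 <= q < 1 -> (0 < g)%N ->
  (forall k, 0 <= u k) -> {homo u : a b / (a <= b)%N >-> b <= a} ->
  (forall n, \sum_(0 <= k < n) u k <= B) ->
  forall e, 0 < e -> exists T, forall t, (T <= t)%N ->
    t%:R * collision_bound q u g t <= e.
Proof.
move=> q01 g0 u0 u_noninc uB e e0.
have c0 : 0 < 12 * g%:R + 6 :> R by have := ler0n R g; lra.
set delta := e / (12 * g%:R + 6).
have delta0 : 0 < delta by rewrite divr_gt0.
have [N1 HN1] := nonincreasing_mul_index_small u0 u_noninc uB delta0.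
have [N2 HN2] := geometric_mul_index_small q01 delta0.
set M := (maxn N1 N2).+1.
exists (3 * (g * M))%N => t tT.
rewrite /collision_bound; set m := (t %/ 3)%N; set K := (m %/ g)%N.
have mM : (g * M <= m)%N by have := leq_div2r 3 tT; rewrite mulKn.
have KM : (M <= K)%N by have := leq_div2r g mM; rewrite mulKn.
have gMM : (M <= g * M)%N by exact: leq_pmull.
have m1 : (1 <= m)%N by lia.
have tm : (t <= 6 * m)%N by have := ltn_ceil t (isT : (0 < 3)%N); lia.
have mK : (m <= 2 * (K * g))%N.
  have := ltn_ceil m g0; rewrite mulSn -/K.
  have : (g <= K * g)%N by rewrite leq_pmull //; lia.
  lia.
have HK : K%:R * q ^+ K <= delta by apply: HN2; lia.
have Hu : m%:R * u m <= delta by apply: HN1; lia.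
have qK0 : 0 <= q ^+ K by apply: exprn_ge0; case/andP: q01.
have tmR : t%:R <= 6 * m%:R :> R by rewrite -natrM ler_nat.
have mKR : m%:R <= 2 * g%:R * K%:R :> R.
  by rewrite -!natrM ler_nat; lia.
have Hsum : t%:R * (q ^+ K + u m) <= 6 * (m%:R * q ^+ K) + 6 * (m%:R * u m).
  rewrite (_ : 6 * _ + 6 * _ = 6 * m%:R * (q ^+ K + u m)); last by ring.
  by apply: ler_wpM2r => //; exact: addr_ge0.
have Hq : m%:R * q ^+ K <= 2 * g%:R * delta.
  apply: le_trans (ler_wpM2r qK0 mKR) _; rewrite -[_ * _ * q ^+ K]mulrA.
  by apply: ler_wpM2l => //; rewrite mulr_ge0 ?ler0n.
rewrite -(divfK (lt0r_neq0 c0) e) -/delta.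
lra.
Qed.

End Tails.

Section Probability.
Variables (R : realType) (d : measure_display) (Omega : measurableType d)
  (P : probability Omega R).

Lemma prbE (E : set Omega) : measurable E -> P E = (prb P E)%:E.
Proof.
move=> mE; rewrite /prb fineK // ge0_fin_numE //.
exact: le_lt_trans (probability_le1 P mE) (ltry _).
Qed.

Lemma prb_ge0 E : 0 <= prb P E.
Proof. by rewrite /prb fine_ge0. Qed.

Lemma prb_le1 E : measurable E -> prb P E <= 1.
Proof. by move=> mE; rewrite -lee_fin -prbE //; exact: probability_le1. Qed.

Lemma le_prb E F : measurable E -> measurable F -> E `<=` F ->
  prb P E <= prb P F.
Proof.
by move=> mE mF EF; rewrite -lee_fin -!prbE //; apply: le_measure; rewrite ?inE.
Qed.

Lemma prb_setT : prb P setT = 1.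
Proof. by rewrite /prb probability_setT. Qed.

Lemma prb_setI_ge E F : measurable E -> measurable F ->
  prb P E + prb P F - 1 <= prb P (E `&` F).
Proof.
move=> mE mF.
have mD : measurable (E `\` F) by exact: measurableD.
have mI : measurable (E `&` F) by exact: measurableI.
have EDI : prb P E = prb P (E `\` F) + prb P (E `&` F).
  by apply: EFin_inj; rewrite EFinD -!prbE //; exact: measureDI.
have DC : prb P (E `\` F) <= 1 - prb P F.
  have mC : measurable (~` F) by exact: measurableC.
  have -> : 1 - prb P F = prb P (~` F).
    by apply: EFin_inj; rewrite -prbE // probability_setC // prbE.
  by apply: le_prb => // w [].
lra.
Qed.

Lemma prb_bigsetU n (H : 'I_n -> set Omega) : (forall k, measurable (H k)) ->
  trivIset setT H ->
  prb P (\big[setU/set0]_(k < n) H k) = \sum_(k < n) prb P (H k).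
Proof.
move=> mH tH; apply: EFin_inj.
rewrite -prbE; last by apply: bigsetU_measurable => k _; exact: mH.
by rewrite measure_bigsetU_ord // -sumEFin; apply: eq_bigr => k _; exact: prbE.
Qed.

End Probability.

Section Process.
Variables (R : realType) (d : measure_display) (Omega : measurableType d)
  (P : probability Omega R) (A : finType) (X : int -> Omega -> A).
Hypothesis Xm : process_measurable X.
Hypothesis Xst : stationary P X.

Definition cylinder (l : seq (int * A)) : set Omega :=
  [set w | all (fun p => X p.1 w == p.2) l].

Lemma cylinder_nil : cylinder [::] = setT.
Proof. by apply/seteqP; split. Qed.

Lemma cylinder_cons p l :
  cylinder (p :: l) = X p.1 @^-1` [set p.2] `&` cylinder l.
Proof.
apply/seteqP; split => w; rewrite /cylinder /=; first by case/andP => /eqP.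
by case=> -> ->; rewrite eqxx.
Qed.

Lemma measurable_cylinder l : measurable (cylinder l).
Proof.
elim: l => [|p l IH]; first by rewrite cylinder_nil.
by rewrite cylinder_cons; apply: measurableI => //; exact: Xm.
Qed.

Lemma sigma_cylinder (G : set (set Omega)) l :
  (forall p, p \in l -> G (X p.1 @^-1` [set p.2])) -> <<s G >> (cylinder l).
Proof.
elim: l => [|p l IH] Hl.
  by rewrite cylinder_nil; exact: (@measurableT _ (g_sigma_algebraType G)).
rewrite cylinder_cons; apply: (@measurableI _ (g_sigma_algebraType G)).
  by apply: sub_gen_smallest; apply: Hl; rewrite mem_head.
by apply: IH => q ql; apply: Hl; rewrite in_cons ql orbT.
Qed.

Lemma prb_cylinder_shift m l :
  prb P (cylinder [seq (p.1 + m, p.2) | p <- l]) = prb P (cylinder l).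
Proof.
rewrite /prb -(Xst m l); congr (fine (P _)); apply/seteqP; split => w;
by rewrite /cylinder /= all_map.
Qed.

Lemma prb_letter_shift j a :
  prb P (X j @^-1` [set a]) = prb P (X 1 @^-1` [set a]).
Proof.
have := prb_cylinder_shift (j - 1) [:: (1, a)].
by rewrite /= !cylinder_cons cylinder_nil !setIT /= addrC subrK.
Qed.

Lemma measurable_eq i j : measurable [set w | X i w = X j w].
Proof.
have -> : [set w | X i w = X j w] = \big[setU/set0]_(k < #|A|)
    (X i @^-1` [set enum_val k] `&` X j @^-1` [set enum_val k]).
  apply/seteqP; split => w /=.
    by move=> Hw; apply/bigsetU_ordP; exists (enum_rank (X i w)); rewrite /= enum_rankK Hw.
  by move/bigsetU_ordP => -[k [/= -> ->]].
by apply: bigsetU_measurable => k _; apply: measurableI; exact: Xm.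
Qed.

Definition shift_match (J : seq int) (r : int) : set Omega :=
  [set w | forall j, j \in J -> X j w = X (j + r) w].

Lemma measurable_shift_match J r : measurable (shift_match J r).
Proof.
elim: J => [|j J IH].
  by rewrite (_ : shift_match [::] r = setT) //; apply/seteqP; split.
have -> : shift_match (j :: J) r = [set w | X j w = X (j + r) w] `&` shift_match J r.
  apply/seteqP; split => w /=.
    move=> H; split; first by apply: H; rewrite mem_head.
    by move=> j' Hj'; apply: H; rewrite in_cons Hj' orbT.
  by case=> H1 H2 j'; rewrite in_cons => /orP[/eqP->|/H2].
by apply: measurableI => //; exact: measurable_eq.
Qed.

Definition block_match (s t : nat) : set Omega :=
  [set w | forall i : nat, (1 <= i <= t)%N -> X i%:Z w = X (i + s)%:Z w].

Lemma match_probE s t : match_prob P X s t = prb P (block_match s t).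
Proof. by []. Qed.

Lemma measurable_block_match s t : measurable (block_match s t).
Proof.
have -> : block_match s t = \bigcap_i
    (if (1 <= i <= t)%N then [set w | X i%:Z w = X (i + s)%:Z w] else setT).
  apply/seteqP; split => w /=.
    by move=> H i _; case: ifP => // Hi; exact: H.
  by move=> H i Hi; have := H i I; rewrite Hi.
by apply: bigcapT_measurable => k; case: ifP => _ //; exact: measurable_eq.
Qed.

Lemma block_match_periodic s t w : block_match s t w ->
  forall k i, (1 <= i)%N -> (i + k * s <= t)%N ->
  X i%:Z w = X (i + k.+1 * s)%:Z w.
Proof.
move=> Hw; elim=> [|k IH] i i1 Hk.
  by rewrite mul1n; apply: Hw; rewrite i1 /=; rewrite mul0n addn0 in Hk.
rewrite IH //; last by apply: leq_trans Hk; rewrite leq_add2l leq_mul2r leqnSn orbT.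
rewrite (_ : (i + k.+2 * s = (i + k.+1 * s) + s)%N); last by rewrite [(k.+2 * s)%N]mulSn; lia.
by apply: Hw; apply/andP; split; [lia | apply: leq_trans Hk; rewrite mulSn; lia].
Qed.

Lemma letter_prob_lt1 : (recurrence_R P X < 1%E)%E ->
  forall a, prb P (X 1 @^-1` [set a]) < 1.
Proof.
move=> HR a; rewrite ltNge; apply/negP => Ha.
set E := X 1 @^-1` [set a]; set F := X (1 + 1%:Z) @^-1` [set a].
have mE : measurable E by exact: Xm.
have mF : measurable F by exact: Xm.
have E1 : prb P E = 1 by apply/eqP; rewrite eq_le prb_le1 ?Ha.
have F1 : prb P F = 1 by rewrite /F prb_letter_shift -/E E1.
have EF_eq : prb P (E `&` F) <= prb P [set w | X 1 w = X (1 + 1%:Z) w].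
  by apply: le_prb; [exact: measurableI | exact: measurable_eq | move=> w [/= -> ->]].
have EF1 := prb_setI_ge P mE mF; rewrite E1 F1 in EF1.
have : (1%:E <= recurrence_R P X)%E.
  apply: le_trans (_ : (prb P [set w | X 1 w = X (1 + 1%:Z) w])%:E <= _)%E.
    by rewrite lee_fin; apply: le_trans EF_eq; lra.
  by apply: ereal_sup_ubound; exists 1%N.
by rewrite leNgt HR.
Qed.

Lemma letter_prob_le_lt1 : (recurrence_R P X < 1%E)%E ->
  exists2 p0 : R, 0 <= p0 < 1 & forall a, prb P (X 1 @^-1` [set a]) <= p0.
Proof.
move=> HR; exists (\big[Order.max/0]_(a : A) prb P (X 1 @^-1` [set a])).
  apply/andP; split; elim/big_ind: _ => //.
  - by move=> x y Hx Hy; rewrite le_max Hx.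
  - by move=> a _; exact: prb_ge0.
  - by move=> x y Hx Hy; rewrite gt_max Hx Hy.
  - by move=> a _; exact: letter_prob_lt1.
by move=> a; exact: le_bigmax.
Qed.

Lemma mixing_coef_ge0 s : (0 <= mixing_coef P X s)%E.
Proof.
apply: ereal_sup_ubound; exists 0, setT, setT; split.
- exact: (@measurableT _ (g_sigma_algebraType (past_gen X 0))).
- exact: (@measurableT _ (g_sigma_algebraType (future_gen X (0 + s%:Z)))).
- by rewrite prb_setT.
- by rewrite setIT prb_setT divr1 subrr normr0.
Qed.

Definition dmix s := fine (mixing_coef P X s).

Section Mixing.
Hypothesis Hsum : ((\sum_(0 <= s <oo) mixing_coef P X s) < +oo)%E.

Lemma mixing_coefE s : mixing_coef P X s = (dmix s)%:E.
Proof.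
rewrite /dmix fineK // ge0_fin_numE ?mixing_coef_ge0 //.
apply: le_lt_trans Hsum.
apply: le_trans (nneseries_lim_ge s.+1 (fun n _ _ => mixing_coef_ge0 n)).
by rewrite big_nat_recr //= leeDr //; apply: sume_ge0 => n _; exact: mixing_coef_ge0.
Qed.

Lemma dmix_ge0 s : 0 <= dmix s.
Proof. by rewrite -lee_fin -mixing_coefE mixing_coef_ge0. Qed.

Lemma dmix_nonincr : {homo dmix : a b / (a <= b)%N >-> b <= a}.
Proof.
move=> s s' ss'; rewrite -lee_fin -!mixing_coefE.
apply: ereal_sup_le => v [i [E [F [HE HF HP ->]]]].
exists i, E, F; split => //.
apply: (smallest_sub (@smallest_sigma_algebra _ setT _)) HF.
move=> G [j [a [ij ->]]]; apply: sub_gen_smallest; exists j, a; split => //.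
by apply: le_trans ij; rewrite lerD2l lez_nat.
Qed.

Lemma dmix_partial_sum_le n :
  \sum_(0 <= k < n) dmix k <= fine (\sum_(0 <= s <oo) mixing_coef P X s).
Proof.
have ser_ge0 := @nneseries_lim_ge _ _ xpredT 0 0 (fun k _ _ => mixing_coef_ge0 k).
rewrite big_geq // in ser_ge0.
rewrite -lee_fin fineK; last by rewrite ge0_fin_numE.
rewrite -sumEFin (eq_bigr _ (fun k _ => esym (mixing_coefE k))).
exact: (@nneseries_lim_ge _ _ xpredT 0 n (fun k _ _ => mixing_coef_ge0 k)).
Qed.

Lemma prb_mixing_le i s E F : measurable E -> measurable F ->
  <<s past_gen X i >> E -> <<s future_gen X (i + s%:Z) >> F ->
  prb P (F `&` E) <= prb P E * (prb P F + dmix s).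
Proof.
move=> mE mF HE HF.
have FE_E : prb P (F `&` E) <= prb P E by apply: le_prb => //; exact: measurableI.
have [E0|E_neq0] := eqVneq (prb P E) 0; first by move: FE_E; rewrite E0 mul0r.
have E_gt0 : 0 < prb P E by rewrite lt_neqAle eq_sym E_neq0 prb_ge0.
have Hsup : ((`|prb P (F `&` E) / prb P E - prb P F|)%:E <= mixing_coef P X s)%E.
  by apply: ereal_sup_ubound; exists i, E, F; split.
rewrite mixing_coefE lee_fin in Hsup.
have Hcond : prb P (F `&` E) / prb P E <= prb P F + dmix s.
  by rewrite -lerBlDl (le_trans (ler_norm _)).
by rewrite -[X in X <= _](divfK E_neq0) mulrC ler_pM2l.
Qed.

(* Peel off the latest point: it lies at least g after all the others. *)
Lemma prb_sparse_cylinder_le p0 g (I : seq int) (a : seq A) :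
  (forall b, prb P (X 1 @^-1` [set b]) <= p0) ->
  sparse g I -> size a = size I ->
  prb P (cylinder (zip I a)) <= (p0 + dmix g) ^+ size I.
Proof.
move=> Hp0; elim: I a => [|j I IH] [|b a] //=.
  by rewrite cylinder_nil prb_setT.
move=> /andP[Hj Hs] [Hsz].
rewrite cylinder_cons /= exprSr.
have mE := measurable_cylinder (zip I a).
apply: le_trans (prb_mixing_le (i := j - g%:Z) (s := g) mE (Xm j b) _ _) _.
- apply: sigma_cylinder => p /mem_zip_fst pI; exists p.1, p.2; split => //.
  by rewrite lerBrDr; move/allP: Hj; apply.
- by apply: sub_gen_smallest; exists j, b; split => //; rewrite subrK.
- apply: ler_pM; [exact: prb_ge0 | | exact: IH | by rewrite lerD2r prb_letter_shift].
  by apply: addr_ge0; [exact: prb_ge0 | exact: dmix_ge0].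
Qed.

Lemma cylinder_zip_map w (I : seq int) :
  cylinder (zip I [seq X j w | j <- I]) w.
Proof. by elim: I => [|j I IH] //=; rewrite /cylinder /= eqxx. Qed.

Lemma cylinder_zip_eq w (I : seq int) (a : seq A) : size a = size I ->
  cylinder (zip I a) w -> a = [seq X j w | j <- I].
Proof.
elim: I a => [|j I IH] [|b a] //= [Hs] /andP[/eqP -> H].
by rewrite (IH a Hs H).
Qed.

Lemma shift_match_cylinder w (J : seq int) (r : int) : shift_match J r w ->
  cylinder (zip [seq j + r | j <- J] [seq X j w | j <- J]) w.
Proof.
rewrite /cylinder /=; elim: J => [|j J IH] Hw //=.
rewrite -Hw ?mem_head // eqxx /=; apply: IH => j' Hj'; apply: Hw.
by rewrite in_cons Hj' orbT.
Qed.

(* Split the event according to the word a read on I: the word read on I + r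
   is then a as well, and the mixing estimate across the gap G applies to
   each piece. *)
Lemma prb_shift_match_le (I : seq int) (r i0 : int) (G : nat) (B : R) :
  (forall j, j \in I -> j <= i0 /\ i0 + G%:Z <= j + r) ->
  (forall a : seq A, size a = size I -> prb P (cylinder (zip I a)) <= B) ->
  0 <= B -> prb P (shift_match I r) <= B + dmix G.
Proof.
move=> HI HB B0.
pose a (k : 'I_#|{: (size I).-tuple A}|) : (size I).-tuple A := enum_val k.
pose E k := cylinder (zip I (a k)).
pose F k := cylinder (zip [seq j + r | j <- I] (a k)).
have sza k : size (a k) = size I by rewrite size_tuple.
have mE k : measurable (E k) by exact: measurable_cylinder.
have mF k : measurable (F k) by exact: measurable_cylinder.
have mFE k : measurable (F k `&` E k) by exact: measurableI.
have tE : trivIset setT E.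
  move=> k k' _ _ [w [H1 H2]]; apply: enum_val_inj; apply: val_inj.
  exact: etrans (cylinder_zip_eq (sza k) H1) (esym (cylinder_zip_eq (sza k') H2)).
have tFE : trivIset setT (fun k => F k `&` E k).
  by move=> k k' _ _ [w [[_ H1] [_ H2]]]; apply: tE => //; exists w.
have cover : shift_match I r `<=` \big[setU/set0]_k (F k `&` E k).
  move=> w Hw; apply/bigsetU_ordP.
  exists (enum_rank (map_tuple (fun j => X j w) (in_tuple I))).
  rewrite /F /E /a enum_rankK /=; split; last exact: cylinder_zip_map.
  exact: shift_match_cylinder.
apply: le_trans (le_prb P (measurable_shift_match I r) _ cover) _.
  by apply: bigsetU_measurable => k _.
rewrite prb_bigsetU //.
have HFE k : prb P (F k `&` E k) <= prb P (E k) * (B + dmix G).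
  apply: le_trans (prb_mixing_le (i := i0) (s := G) (mE k) (mF k) _ _) _.
  - apply: sigma_cylinder => p /mem_zip_fst pI; exists p.1, p.2; split => //.
    by have [] := HI _ pI.
  - apply: sigma_cylinder => p /mem_zip_fst /mapP [j jI ->].
    by exists (j + r), p.2; split => //; have [] := HI _ jI.
  - rewrite /F zip_mapl prb_cylinder_shift -/(E k).
    by apply: ler_wpM2l; [exact: prb_ge0 | rewrite lerD2r HB].
apply: le_trans (ler_sum _ (fun k _ => HFE k)) _.
rewrite -mulr_suml -prb_bigsetU // ler_piMl //; first by rewrite addr_ge0 ?dmix_ge0.
by apply: prb_le1; apply: bigsetU_measurable => k _.
Qed.

(* With m := t/3 and r the least multiple of s exceeding 2m, the points of
   gap_points g (m/g) lie in [1, m] and their translates by r beyond 2m. *)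
Lemma match_prob_le_collision_bound p0 g s t :
  (forall a, prb P (X 1 @^-1` [set a]) <= p0) -> (0 < g)%N -> (0 < s)%N ->
  match_prob P X s t <= collision_bound (p0 + dmix g) dmix g t.
Proof.
move=> Hp0 g1 s1; rewrite /collision_bound.
set m := (t %/ 3)%N; set K := (m %/ g)%N; set k0 := ((2 * m) %/ s)%N.
set I := [seq Posz x | x <- gap_points g K].
have Hr : (2 * m < k0.+1 * s)%N by exact: ltn_ceil.
have Hk0 : (k0 * s <= 2 * m)%N by exact: leq_divM.
have Hm : (m * 3 <= t)%N by exact: leq_divM.
have HK : (K * g <= m)%N by exact: leq_divM.
have q0 : 0 <= p0 + dmix g.
  by rewrite addr_ge0 ?dmix_ge0 // (le_trans (prb_ge0 P _) (Hp0 (X 1 point))).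
have gap_in_I j : (j \in I) -> exists2 k, (k < K)%N & j = (1 + k * g)%N.
  by move=> /mapP [x /gap_pointsP [k kK ->] ->]; exists k.
apply: le_trans (_ : prb P (shift_match I (k0.+1 * s)%N) <= _).
  rewrite match_probE; apply: le_prb.
  - exact: measurable_block_match.
  - exact: measurable_shift_match.
  move=> w Hw j /gap_in_I [k kK ->].
  have kgK : (k * g < K * g)%N by rewrite ltn_mul2r kK andbT.
  by rewrite -PoszD; apply: (block_match_periodic Hw); lia.
apply: (prb_shift_match_le (i0 := m) _ _ (exprn_ge0 _ q0)).
  move=> j /gap_in_I [k kK ->]; rewrite -!PoszD !lez_nat.
  have kgK : (k.+1 * g <= K * g)%N by rewrite leq_mul2r kK orbT.
  by rewrite mulSn in kgK; split; lia.
move=> a Ha; have := prb_sparse_cylinder_le Hp0 (sparse_gap_points g K) Ha.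
by rewrite size_map size_gap_points.
Qed.

Lemma match_prob_mul_index_small : (recurrence_R P X < 1%E)%E ->
  forall e, 0 < e -> exists T, forall s t, (0 < s)%N -> (T <= t)%N ->
    t%:R * match_prob P X s t <= e.
Proof.
move=> HR e e0.
have [p0 /andP[p0_ge0 p0_lt1] Hp0] := letter_prob_le_lt1 HR.
have e1 : 0 < (1 - p0) / 2 by lra.
have [N HN] :=
  nonincreasing_mul_index_small dmix_ge0 dmix_nonincr dmix_partial_sum_le e1.
have Dg : dmix N.+1 <= (1 - p0) / 2.
  by apply: le_trans (HN _ (leqnSn _)); rewrite ler_peMl ?dmix_ge0 // ler1n.
have q01 : 0 <= p0 + dmix N.+1 < 1 by have := dmix_ge0 N.+1; lra.
have [T HT] := collision_bound_mul_index_small q01 (ltn0Sn N)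
  dmix_ge0 dmix_nonincr dmix_partial_sum_le e0.
exists T => s t s1 tT; apply: le_trans (HT t tT).
by apply: ler_wpM2l => //; exact: match_prob_le_collision_bound.
Qed.

End Mixing.

Lemma max_match_prob_ge0 h beta eta n : 0 <= max_match_prob P X h beta eta n.
Proof.
apply: sup_upper_bound; last by left.
split; first by exists 0; left.
exists 1 => v [-> //|[s [t [_ _ _ _ ->]]]].
by rewrite match_probE prb_le1 //; exact: measurable_block_match.
Qed.

Lemma max_match_prob_le h beta eta n (B : R) : 0 <= B ->
  (forall s t : nat, (1 <= s)%N -> (1 + eta) / h * @logA R A n%:R <= t%:R ->
     match_prob P X s t <= B) ->
  max_match_prob P X h beta eta n <= B.
Proof.
move=> B0 HB; apply: ge_sup; first by exists 0; left.
by move=> v [->|[s [t [s1 _ ht _ ->]]]] //; exact: HB.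
Qed.

End Process.

Section LogA.
Variables (R : realType) (A : finType).

Lemma logA_card_le1 (x : R) : (#|A| <= 1)%N -> @logA R A x = 0.
Proof.
rewrite /logA; case: #|A| => [|[|//]] _; last by rewrite [ln _%:R]ln1 invr0 mulr0.
by rewrite [ln _%:R]ln0 // invr0 mulr0.
Qed.

Lemma logA_ge_eventually (M : R) : (1 < #|A|)%N ->
  \forall n \near \oo, M <= @logA R A n%:R.
Proof.
move=> A1; have lnA : 0 < ln (#|A|%:R : R) by apply: ln_gt0; rewrite ltr1n.
near=> n; rewrite /logA ler_pdivlMr //.
have Hn : expR (M * ln (#|A|%:R : R)) <= n%:R by near: n; exact: nbhs_infty_ger.
have n0 : 0 < (n%:R : R) by exact: lt_le_trans (expR_gt0 _) Hn.
by rewrite -ler_ln ?posrE ?expR_gt0 // expRK in Hn.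
Unshelve. all: end_near.
Qed.

End LogA.

Theorem mainTheorem10 (R : realType) (d : measure_display)
  (Omega : measurableType d) (P : probability Omega R) (A : finType)
  (X : int -> Omega -> A) (h beta eta : R) :
  process_measurable X ->
  stationary P X ->
  (mixing_coef P X @ \oo --> 0%E) ->
  ((\sum_(0 <= s <oo) mixing_coef P X s) < +oo)%E ->
  ((fun t : nat => block_entropy P X t / (2 * t + 1)%:R : R) @ \oo --> h) ->
  0 < h ->
  (recurrence_R P X < 1%E)%E ->
  0 < beta -> 0 < eta ->
  (fun n : nat => max_match_prob P X h beta eta n * @logA R A n%:R : R) @ \oo --> (0 : R).
Proof.
move=> Xm Xst _ Hsum _ h0 HR _ eta0.
set c := (1 + eta) / h; have c0 : 0 < c by rewrite divr_gt0 //; lra.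
have [A1|A1] := leqP #|A| 1.
  by under eq_fun do rewrite logA_card_le1 // mulr0; exact: cvg_cst.
apply/cvgrPdist_le => e e0.
have [T HT] := match_prob_mul_index_small Xm Xst Hsum HR (mulr_gt0 e0 c0).
near=> n.
have Ln : T.+1%:R / c <= @logA R A n%:R by near: n; exact: logA_ge_eventually.
set L := @logA R A n%:R in Ln *.
have L0 : 0 < L by apply: lt_le_trans Ln; rewrite divr_gt0.
rewrite sub0r normrN ger0_norm; last first.
  by apply: mulr_ge0; [exact: max_match_prob_ge0 | exact: ltW].
rewrite -ler_pdivlMr //; apply: max_match_prob_le => [|s t s1 ht].
  by rewrite divr_ge0 // ltW.
have tT : (T <= t)%N.
  rewrite -(ler_nat R); apply: le_trans ht; rewrite mulrC -ler_pdivrMr //.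
  by apply: le_trans Ln; rewrite ler_pM2r ?invr_gt0 // ler_nat.
rewrite ler_pdivlMr //; apply: le_trans (_ : match_prob P X s t * (t%:R / c) <= _).
  by apply: ler_wpM2l; [exact: prb_ge0 | rewrite ler_pdivlMr // mulrC].
by rewrite mulrA ler_pdivrMr // [_ * t%:R]mulrC HT.
Unshelve. all: end_near.
Qed.
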